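(* Let $(X,\mathcal{A},\mu,T)$ be an ergodic probability preserving system. a) For every set $A\in\mathcal{A}$ (with $\mu(A)>0$) and integer $m\ge0$, $d_{[0,\infty]^{\mathbb{N}_0}}(\mu(A)\Phi_A\circ T^m,\mu(A)\Phi_A)\le m\mu(A)$ on $\{\varphi_A>m\}$. b) If $(A_l)_{l\ge1}$ is a sequence of asymptotically rare events and $R_l:=\mu(A_l)\Phi_{A_l}:X\to[0,\infty]^{\mathbb{N}_0}$, then $(R_l)$ is asymptotically $T$-invariant in measure. c) Likewise, if $R_l:=\mu(A_l)\Phi_{A_l}\circ T_{A_l}:X\to[0,\infty]^{\mathbb{N}}$, then $(R_l)$ is asymptotically $T$-invariant in measure.
   Context: For $A$ with $\mu(A)>0$: $\varphi_A(x):=\inf\{n\ge1:T^nx\in A\}$, $T_Ax:=T^{\varphi_A(x)}x$, $\Phi_A:=(\varphi_A,\varphi_A\circ T_A,\varphi_A\circ T_A^2,\ldots)$. $[0,\infty]$ carries the metric $d_{[0,\infty]}(s,t)=|e^{-s}-e^{-t}|$ and $[0,\infty]^{\mathbb{N}_0}$ the product metric $d(s,t)=\sum_{j\ge0}2^{-(j+1)}d_{[0,\infty]}(s^{(j)},t^{(j)})$ (similarly on $[0,\infty]^{\mathbb{N}}$). Asymptotically rare: $0<\mu(A_l)\to0$. $(R_l)$ asymptotically $T$-invariant in measure: $d(R_l\circ T,R_l)\to0$ in $\mu$-measure. *)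

From HB Require Import structures.
From mathcomp Require Import all_boot all_order all_algebra.
From mathcomp Require Import all_classical all_reals all_analysis.
Set Implicit Arguments. Unset Strict Implicit. Unset Printing Implicit Defensive.
Import Order.TTheory GRing.Theory Num.Theory.
Local Open Scope classical_set_scope.
Local Open Scope ring_scope.

Section Defs.
Context {d : measure_display} {X : measurableType d} {R : realType}.

Definition measure_preserving (P : probability X R) (T : X -> X) :=
  measurable_fun setT T /\
  forall B, measurable B -> P (T @^-1` B) = P B.

Definition ergodic_pps (P : probability X R) (T : X -> X) :=
  measure_preserving P T /\
  forall B, measurable B -> T @^-1` B = B -> P B = 0%E \/ P B = 1%E.

Definition hits (T : X -> X) (A : set X) (x : X) :=
  exists n, ((0 < n)%N && `[< A (iter n T x) >]).

Definition hit_time (T : X -> X) (A : set X) (x : X) : option nat :=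
  match pselect (hits T A x) with
  | left h => Some (ex_minn h)
  | right _ => None
  end.

Definition phiA (T : X -> X) (A : set X) (x : X) : \bar R :=
  match hit_time T A x with Some n => (n%:R)%:E | None => +oo%E end.

(* induced map T_A x = T^{phi_A x} x (set to x when phi_A x = +oo) *)
Definition TA (T : X -> X) (A : set X) (x : X) : X :=
  match hit_time T A x with Some n => iter n T x | None => x end.

(* mu(A) Phi_A : X -> [0,oo]^{N_0},  j |-> mu(A) phi_A(T_A^j x) *)
Definition scaledPhi (P : probability X R) (T : X -> X) (A : set X)
  (x : X) : nat -> \bar R :=
  fun j => (P A * phiA T A (iter j (TA T A) x))%E.

(* mu(A) Phi_A o T_A : X -> [0,oo]^N, coordinate k >= 1 stored at index k-1 *)
Definition scaledPhiInd (P : probability X R) (T : X -> X) (A : set X)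
  (x : X) : nat -> \bar R :=
  fun j => (P A * phiA T A (iter j.+1 (TA T A) x))%E.

End Defs.

Definition expneg {R : realType} (t : \bar R) : R :=
  match t with
  | EFin r => expR (- r)
  | _ => 0
  end.

Definition d01 {R : realType} (s t : \bar R) : R := `|expneg s - expneg t|.

Definition dseq {R : realType} (s t : nat -> \bar R) : R :=
  limn (fun n => \sum_(j < n) (2 ^- j.+1 * d01 (s j) (t j))).

Definition asymp_rare {d} {X : measurableType d} {R : realType}
  (P : probability X R) (A : nat -> set X) :=
  (forall l, measurable (A l) /\ (0 < P (A l))%E) /\
  (P \o A) @ \oo --> 0%E.

Definition asymp_T_invariant_in_measure {d} {X : measurableType d}
  {R : realType} (P : probability X R) (T : X -> X)
  (Rl : nat -> X -> nat -> \bar R) :=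
  forall eps : R, 0 < eps ->
    (fun l => P [set x | eps < dseq (Rl l (T x)) (Rl l x)]) @ \oo --> 0%E.

(* If T x, ..., T^m x all avoid A, the orbits of x and T^m x first enter A at
   the same point, so the return-time sequences of x and T^m x coincide after
   their first terms, which differ by m (on orbits that never enter A every
   term is +oo).  As t |-> e^{-t} is 1-Lipschitz on [0, +oo], the
   scaled sequences are then within distance m mu(A).  Hence, with m = 1,
   d(R_l o T, R_l) > eps forces T x in A_l as soon as mu(A_l) < eps (always,
   for the induced sequences, whose first terms agree too), an event of
   measure mu(A_l) -> 0 by invariance of mu.  The remaining work is
   measurability: the return time has countably many measurable level sets. *)

From HB Require Import structures.
From mathcomp Require Import all_boot all_order all_algebra.
From mathcomp Require Import all_classical all_reals all_analysis.
From mathcomp Require Import lra zify measurable_realfun.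
Import Order.TTheory GRing.Theory Num.Theory numFieldNormedType.Exports.
Local Open Scope classical_set_scope.
Local Open Scope ring_scope.

Section hitting_time.
Context {d} {X : measurableType d} {T : X -> X} {A : set X} {R : realType}.

Lemma hit_time_someP {x n} : hit_time T A x = Some n ->
  [/\ (0 < n)%N, A (iter n T x) & forall k, (0 < k < n)%N -> ~ A (iter k T x)].
Proof.
rewrite /hit_time; case: pselect => // h [<-].
case: ex_minnP => m /andP[m0 /asboolP Am] minm; split => // k /andP[k0 kn] Ak.
have /minm : (0 < k)%N && `[< A (iter k T x) >] by rewrite k0; apply/asboolP.
by rewrite leqNgt kn.
Qed.

Lemma hit_time_noneP {x} : hit_time T A x = None ->
  forall n, (0 < n)%N -> ~ A (iter n T x).
Proof.
rewrite /hit_time; case: pselect => // h _ n n0 An; apply: h.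
by exists n; rewrite n0; apply/asboolP.
Qed.

Lemma hit_time_some x n : (0 < n)%N -> A (iter n T x) ->
  (forall k, (0 < k < n)%N -> ~ A (iter k T x)) -> hit_time T A x = Some n.
Proof.
move=> n0 An before_n; case E: (hit_time T A x) => [m|]; last first.
  by case: (hit_time_noneP E n n0).
have [m0 Am before_m] := hit_time_someP E; congr Some.
case: (ltngtP m n) => // [mn|nm]; first by case: (before_n m); rewrite ?m0.
by case: (before_m n); rewrite ?n0.
Qed.

Lemma hit_time_none x : (forall n, (0 < n)%N -> ~ A (iter n T x)) ->
  hit_time T A x = None.
Proof.
move=> never; case E: (hit_time T A x) => [m|] //.
by have [m0 Am _] := hit_time_someP E; case: (never m).
Qed.

Lemma hit_time_iter_some {x m n} : hit_time T A x = Some n -> (m < n)%N ->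
  hit_time T A (iter m T x) = Some (n - m)%N.
Proof.
move=> /hit_time_someP[n0 An before_n] mn.
apply: hit_time_some; first by rewrite subn_gt0.
  by rewrite -iterD subnK // ltnW.
move=> k /andP[k0 kn]; rewrite -iterD; apply: before_n; lia.
Qed.

Lemma hit_time_iter_none {x} m : hit_time T A x = None ->
  hit_time T A (iter m T x) = None.
Proof.
move=> /hit_time_noneP never; apply: hit_time_none => k k0; rewrite -iterD.
by apply: never; rewrite addn_gt0 k0.
Qed.

Lemma TA_iter_some {x m n} : hit_time T A x = Some n -> (m < n)%N ->
  TA T A (iter m T x) = TA T A x.
Proof.
by move=> E mn; rewrite /TA (hit_time_iter_some E mn) E -iterD subnK // ltnW.
Qed.

Lemma iter_TA_none {x} j : hit_time T A x = None -> iter j (TA T A) x = x.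
Proof. by move=> E; elim: j => //= j ->; rewrite /TA E. Qed.

Lemma phiA_ge0 x : (0 <= phiA T A x :> \bar R)%E.
Proof. by rewrite /phiA; case: hit_time. Qed.

Lemma phiA_iter {x m} : ((m%:R : R)%:E < phiA T A x)%E ->
  (phiA T A (iter m T x) + (m%:R)%:E = phiA T A x :> \bar R)%E.
Proof.
rewrite /phiA; case E: (hit_time T A x) => [n|] /=; last first.
  by rewrite (hit_time_iter_none m E).
rewrite lte_fin ltr_nat => mn.
by rewrite (hit_time_iter_some E mn) -EFinD -natrD subnK // ltnW.
Qed.

Lemma phiA_iter_TA_iter {x m} j : ((m%:R : R)%:E < phiA T A x)%E ->
  phiA T A (iter j.+1 (TA T A) (iter m T x)) =
  phiA T A (iter j.+1 (TA T A) x) :> \bar R.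
Proof.
case E: (hit_time T A x) => [n|]; rewrite [in X in X -> _]/phiA E => hm.
  by move: hm; rewrite lte_fin ltr_nat => mn; rewrite !iterSr (TA_iter_some E mn).
have Em := hit_time_iter_none m E.
by rewrite !iter_TA_none // /phiA Em E.
Qed.

Lemma phiA_gt1 {x} : ~ A (T x) -> ((1%:R : R)%:E < phiA T A x)%E.
Proof.
move=> nATx; rewrite /phiA; case E: (hit_time T A x) => [n|]; last exact: ltry.
have [n0 An _] := hit_time_someP E.
rewrite lte_fin ltr_nat ltn_neqAle n0 andbT.
by apply/eqP => n1; move: An; rewrite -n1.
Qed.

End hitting_time.

Lemma measurable_fun_countable_fibers {d d'} {X : measurableType d}
    {Y : measurableType d'} {K : countType} (h : X -> K) (F : K -> Y) :
  (forall k, measurable (h @^-1` [set k])) -> measurable_fun setT (F \o h).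
Proof.
move=> mh _ B mB; rewrite setTI.
have -> : (F \o h) @^-1` B = \bigcup_n
    if unpickle n is Some k then
      if pselect (B (F k)) then h @^-1` [set k] else set0
    else set0.
  apply/seteqP; split => x /=.
    by move=> Bx; exists (pickle (h x)) => //; rewrite pickleK; case: pselect.
  by case=> n _; case: unpickle => [k|] //; case: pselect => // Bk /= ->.
apply: bigcupT_measurable => n; case: unpickle => [k|] //.
by case: pselect => BFk; [exact: mh|exact: measurable0].
Qed.

Section measurable_hitting_time.
Context {d} {X : measurableType d} {T : X -> X} {A : set X}.
Hypotheses (mT : measurable_fun setT T) (mA : measurable A).

Lemma measurable_fun_iter n : measurable_fun setT (iter n T).
Proof.
by elim: n => [|n IH] /=; [exact: measurable_id|exact: measurableT_comp].
Qed.

Lemma measurable_iter_preimage n B : measurable B ->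
  measurable (iter n T @^-1` B).
Proof. by move=> mB; rewrite -[_ @^-1` _]setTI; exact: measurable_fun_iter. Qed.

Lemma measurable_hit_time_fiber k : measurable (hit_time T A @^-1` [set k]).
Proof.
pose avoid n i := if (0 < i < n)%N then ~` (iter i T @^-1` A) else setT.
have mavoid n i : measurable (avoid n i).
  by rewrite /avoid; case: ifP => _ //; exact/measurableC/measurable_iter_preimage.
case: k => [n|].
- have -> : hit_time T A @^-1` [set Some n] =
      (if (0 < n)%N then iter n T @^-1` A else set0) `&` \bigcap_k avoid n k.
    apply/seteqP; split => x /=.
      move=> /hit_time_someP[n0 An before_n]; rewrite n0; split => // k _.
      by rewrite /avoid; case: ifP => // kn; exact: before_n.
    case: (ltnP 0 n) => n0 // [An avoidx]; apply: hit_time_some => // k kn.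
    by have := avoidx k I; rewrite /avoid kn.
  apply: measurableI; last exact: bigcapT_measurable.
  by case: ifP => _ //; exact: measurable_iter_preimage.
- have -> : hit_time T A @^-1` [set None] = \bigcap_k avoid k.+1 k.
    apply/seteqP; split => x /=.
      move=> /hit_time_noneP never k _; rewrite /avoid.
      by case: ifP => // /andP[k0 _]; exact: never.
    move=> avoidx; apply: hit_time_none => k k0.
    by have := avoidx k I; rewrite /avoid k0 ltnSn.
  exact: bigcapT_measurable.
Qed.

Lemma measurable_fun_TA : measurable_fun setT (TA T A).
Proof.
move=> _ B mB; rewrite setTI.
have -> : TA T A @^-1` B =
    (\bigcup_n (hit_time T A @^-1` [set Some n] `&` iter n T @^-1` B)) `|`
    (hit_time T A @^-1` [set None] `&` B).
  apply/seteqP; split => x /=; rewrite /TA.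
    by case E: (hit_time T A x) => [n|] Bx; [left; exists n|right].
  by case=> [[n _ [-> Bx]]|[-> Bx]].
apply: measurableU; last exact: measurableI (measurable_hit_time_fiber _) mB.
apply: bigcupT_measurable => n.
apply: measurableI; first exact: measurable_hit_time_fiber.
exact: measurable_iter_preimage.
Qed.

Lemma measurable_fun_hit_time_pair {d'} {Y : measurableType d'}
    {g1 g2 : X -> X} (F : option nat * option nat -> Y) :
  measurable_fun setT g1 -> measurable_fun setT g2 ->
  measurable_fun setT (fun x => F (hit_time T A (g1 x), hit_time T A (g2 x))).
Proof.
move=> mg1 mg2; apply: (measurable_fun_countable_fibers
  (fun x => (hit_time T A (g1 x), hit_time T A (g2 x)))) => -[k1 k2].
have -> : (fun x => (hit_time T A (g1 x), hit_time T A (g2 x))) @^-1` [set (k1, k2)]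
    = g1 @^-1` (hit_time T A @^-1` [set k1]) `&`
      g2 @^-1` (hit_time T A @^-1` [set k2]).
  by apply/seteqP; split => x /=; [case=> -> ->|case=> -> ->].
by apply: measurableI; rewrite -[X in measurable X]setTI;
  [apply: mg1|apply: mg2] => //; exact: measurable_hit_time_fiber.
Qed.

End measurable_hitting_time.

Section product_metric.
Context {R : realType}.
Implicit Types (s t : nat -> \bar R) (u : \bar R).

Lemma d01xx u : d01 u u = 0.
Proof. by rewrite /d01 subrr normr0. Qed.

Lemma d01_ge0_le1 {u v} : (0 <= u)%E -> (0 <= v)%E -> 0 <= d01 u v <= 1.
Proof.
have expneg01 w : (0 <= w)%E -> 0 <= expneg w <= 1.
  case: w => [r||] //=; rewrite ?lee_fin => r0; last by rewrite lexx ler01.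
  by rewrite expR_ge0 expR_le1 oppr_le0.
move=> /expneg01/andP[u0 u1] /expneg01/andP[v0 v1].
by rewrite normr_ge0 /= /d01 ler_norml; apply/andP; split; lra.
Qed.

Lemma d01_addr_le {u} {r : R} : (0 <= u)%E -> 0 <= r -> d01 u (u + r%:E) <= r.
Proof.
case: u => [a||] //= a0 r0; last by rewrite d01xx.
rewrite /d01 /= opprD expRD.
have e0 : 0 < expR (- a) by exact: expR_gt0.
have e1 : expR (- a) <= 1 by rewrite expR_le1 oppr_le0.
have f0 : 0 < expR (- r) by exact: expR_gt0.
have f1 : 1 - r <= expR (- r) by exact: expR_ge1Dx.
have f2 : expR (- r) <= 1 by rewrite expR_le1 oppr_le0.
rewrite ger0_norm; nra.
Qed.

Definition dseq_term s t j := 2 ^- j.+1 * d01 (s j) (t j).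

Lemma dseqE s t : dseq s t = limn (series (dseq_term s t) : nat -> R).
Proof. by rewrite /dseq seriesEord. Qed.

Lemma is_cvg_series_dseq_term s t :
  (forall j, 0 <= s j)%E -> (forall j, 0 <= t j)%E ->
  cvgn (series (dseq_term s t)).
Proof.
move=> s0 t0.
have geoE j : geometric 2^-1 2^-1 j = 2 ^- j.+1 :> R.
  by rewrite /geometric /= -exprVn exprS.
apply: (@series_le_cvg _ _ (geometric 2^-1 2^-1)).
- move=> j; rewrite /dseq_term mulr_ge0 //.
  by case/andP: (d01_ge0_le1 (s0 j) (t0 j)).
- by move=> j; rewrite geoE.
- move=> j; rewrite geoE /dseq_term ler_piMr //.
  by case/andP: (d01_ge0_le1 (s0 j) (t0 j)).
- by apply: is_cvg_geometric_series; rewrite ger0_norm // invf_lt1 // ltr1n.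
Qed.

Lemma dseq_head s t : (forall j, s j.+1 = t j.+1) ->
  dseq s t = 2^-1 * d01 (s 0%N) (t 0%N).
Proof.
move=> st; rewrite dseqE; apply: norm_lim_near_cst; near=> n.
have n0 : (0 < n)%N by near: n; exact: nbhs_infty_gt.
rewrite -(prednK n0) seriesEord /= big_ord_recl /= {1}/dseq_term expr1.
rewrite big1 ?addr0 //.
by move=> j _; rewrite /dseq_term /bump /= st d01xx mulr0.
Unshelve. all: end_near.
Qed.

Lemma measurable_fun_dseq {d} {X : measurableType d} (s t : X -> nat -> \bar R) :
  (forall x j, 0 <= s x j)%E -> (forall x j, 0 <= t x j)%E ->
  (forall j, measurable_fun setT (fun x => d01 (s x j) (t x j))) ->
  measurable_fun setT (fun x => dseq (s x) (t x)).
Proof.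
move=> s0 t0 md01.
apply: (measurable_fun_cvg (h := fun n x => series (dseq_term (s x) (t x)) n)).
  move=> n; rewrite /series /=; apply: measurable_sum => j.
  exact: measurable_funM (measurable_cst _) (md01 j).
by move=> x _; rewrite dseqE; exact: is_cvg_series_dseq_term.
Qed.

End product_metric.

Section return_time_process.
Context {d} {X : measurableType d} {R : realType}.
Variables (P : probability X R) (T : X -> X).

Lemma dseq_scaledPhi_iter_le {A : set X} {m x} : measurable A ->
  ((m%:R : R)%:E < phiA T A x)%E ->
  ((dseq (scaledPhi P T A (iter m T x)) (scaledPhi P T A x))%:E
    <= m%:R%:E * P A)%E.
Proof.
move=> mA hm; have /fineK PAE := fin_num_measure P A mA.
have c0 : 0 <= fine (P A) by rewrite -lee_fin PAE.
rewrite /scaledPhi -PAE dseq_head; last by move=> j; rewrite phiA_iter_TA_iter.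
rewrite -(phiA_iter hm) ge0_muleDr ?phiA_ge0 ?lee_fin //= -EFinM [_ * fine _]mulrC.
have u0 : (0 <= (fine (P A))%:E * phiA T A (iter m T x))%E.
  by rewrite mule_ge0 ?phiA_ge0.
apply: le_trans (d01_addr_le u0 (mulr_ge0 c0 (ler0n _ m))).
by apply: ler_piMl; rewrite ?invf_le1 ?ler1n // /d01.
Qed.

Hypotheses (mT : measurable_fun setT T)
  (mP : forall B, measurable B -> P (T @^-1` B) = P B).

Lemma measurable_dseq_phiA_gt {A : set X} {c : \bar R} {g1 g2 : nat -> X -> X}
    {eps : R} : measurable A -> (0 <= c)%E ->
  (forall j, measurable_fun setT (g1 j)) ->
  (forall j, measurable_fun setT (g2 j)) ->
  measurable [set x | eps < dseq (fun j => c * phiA T A (g1 j x))%E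
                                 (fun j => c * phiA T A (g2 j x))%E].
Proof.
move=> mA c0 mg1 mg2.
pose time_value (k : option nat) : \bar R :=
  if k is Some n then (n%:R)%:E else +oo%E.
have mf : measurable_fun setT (fun x => dseq (fun j => c * phiA T A (g1 j x))%E
                                             (fun j => c * phiA T A (g2 j x))%E).
  apply: measurable_fun_dseq => [x j|x j|j]; rewrite ?mule_ge0 ?phiA_ge0 //.
  exact: (measurable_fun_hit_time_pair mT mA
    (fun k => d01 (c * time_value k.1) (c * time_value k.2))%E (mg1 j) (mg2 j)).
by rewrite -[X in measurable X]setTI -preimage_itvoy; exact: mf.
Qed.

Lemma asymp_T_invariant_in_measure_sub_preimage {A : nat -> set X}
    {Rl : nat -> X -> nat -> \bar R} :
  (forall l, measurable (A l)) -> (P \o A) @ \oo --> 0%E ->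
  (forall eps l, measurable [set x | eps < dseq (Rl l (T x)) (Rl l x)]) ->
  (forall eps, 0 < eps -> \forall l \near \oo,
    [set x | eps < dseq (Rl l (T x)) (Rl l x)] `<=` T @^-1` A l) ->
  asymp_T_invariant_in_measure P T Rl.
Proof.
move=> mA PA0 mbad bad_sub eps eps0.
apply: (squeeze_cvge (f := fun=> 0%E) (h := P \o A)); [|exact: cvg_cst|exact: PA0].
apply: filterS (bad_sub eps eps0) => l bad_l; rewrite measure_ge0 /= -(mP _ (mA l)).
apply: le_measure; rewrite ?inE //.
by rewrite -[X in measurable X]setTI; exact: mT.
Qed.

Lemma asymp_T_invariant_scaledPhi (A : nat -> set X) : asymp_rare P A ->
  asymp_T_invariant_in_measure P T (fun l => scaledPhi P T (A l)).
Proof.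
move=> [PA_pos PA0]; have mA l := (PA_pos l).1.
apply: (asymp_T_invariant_in_measure_sub_preimage mA PA0 _ _) => [eps l|eps eps0].
  have miter j := measurable_fun_iter (measurable_fun_TA mT (mA l)) j.
  apply: (measurable_dseq_phiA_gt (mA l) (measure_ge0 _ _)) => j.
    exact: measurableT_comp (miter j) mT.
  exact: miter.
have PA_lt : \forall l \near \oo, (P (A l) < eps%:E)%E.
  exact: PA0 _ (nbhs_open_ereal_lt (f := fun=> eps) eps0).
near=> l => x /= bad; apply: contrapT => nATx.
have PAl_lt : (P (A l) < eps%:E)%E by near: l; exact: PA_lt.
have := dseq_scaledPhi_iter_le (mA l) (phiA_gt1 nATx).
rewrite mul1e => /le_lt_trans/(_ PAl_lt); rewrite lte_fin.
by move/(lt_trans bad); rewrite ltxx.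
Unshelve. all: end_near.
Qed.

Lemma asymp_T_invariant_scaledPhiInd (A : nat -> set X) : asymp_rare P A ->
  asymp_T_invariant_in_measure P T (fun l => scaledPhiInd P T (A l)).
Proof.
move=> [PA_pos PA0]; have mA l := (PA_pos l).1.
apply: (asymp_T_invariant_in_measure_sub_preimage mA PA0 _ _) => [eps l|eps eps0].
  have miter j := measurable_fun_iter (measurable_fun_TA mT (mA l)) j.
  apply: (measurable_dseq_phiA_gt (mA l) (measure_ge0 _ _)) => j.
    exact: measurableT_comp (miter j.+1) mT.
  exact: miter.
apply: nearW => l x /= bad; apply: contrapT => nATx; move: bad.
have gt1 : ((1%:R : R)%:E < phiA T (A l) x)%E := phiA_gt1 nATx.
have phiE j := phiA_iter_TA_iter j gt1.
rewrite dseq_head => [|j]; last by rewrite /scaledPhiInd phiE.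
by rewrite /scaledPhiInd phiE d01xx mulr0 ltNge ltW.
Qed.

End return_time_process.

Theorem mainTheorem12 (d : measure_display) (X : measurableType d)
  (R : realType) (P : probability X R) (T : X -> X) :
  ergodic_pps P T ->
  (* a) *)
  (forall (A : set X) (m : nat), measurable A -> (0 < P A)%E ->
     forall x, ((m%:R : R)%:E < phiA T A x)%E ->
       ((dseq (scaledPhi P T A (iter m T x)) (scaledPhi P T A x))%:E
         <= m%:R%:E * P A)%E) /\
  (* b) *)
  (forall A : nat -> set X, asymp_rare P A ->
     asymp_T_invariant_in_measure P T (fun l => scaledPhi P T (A l))) /\
  (* c) *)
  (forall A : nat -> set X, asymp_rare P A ->
     asymp_T_invariant_in_measure P T (fun l => scaledPhiInd P T (A l))).
Proof.
move=> [[mT mP] _]; split; last split.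
- by move=> A m mA _ x; exact: dseq_scaledPhi_iter_le.
- exact: asymp_T_invariant_scaledPhi.
- exact: asymp_T_invariant_scaledPhiInd.
Qed.
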